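(* In the setting below, for every face $F$ of $\mathcal{P}_\lambda$, every edge of $\phi(F)$ lies on some positive path of $\Gamma_{\mathbf{k}}$ that is entirely contained in $\phi(F)$.
   Context: Let $\mathbf{k}=(k_1,\dots,k_s)$ be positive integers with sum $n$, $n_0=0$, $n_i=\sum_{j\le i}k_j$, and $\lambda=(\lambda_1,\dots,\lambda_n)$ real with $\lambda_1=\cdots=\lambda_{n_1}>\lambda_{n_1+1}=\cdots=\lambda_{n_2}>\cdots>\lambda_{n_{s-1}+1}=\cdots=\lambda_n$. Let $I=\{(i,j)\in\mathbb{Z}^2:i,j\ge1,i+j\le n\}$; $\mathcal{P}_\lambda=\{x=(x_{i,j})_{(i,j)\in I}: x_{i,j+1}\ge x_{i,j}\ge x_{i+1,j}\ \forall (i,j)\in I\}$ with $x_{i,n+1-i}:=\lambda_i$. $Q^+$ is the directed graph on $\mathbb{Z}_{\ge0}^2$ with edges $((i,j),(i,j+1))$, $((i,j),(i+1,j))$. Terminal vertices $T_{\mathbf{k}}=\{(n_\ell,n-n_\ell):0\le\ell\le s\}$; $\Gamma_{\mathbf{k}}$ is the induced subgraph of $Q^+$ on $\{(a,b):a\le c,b\le d\text{ for some }(c,d)\in T_{\mathbf{k}}\}$. A positive path is a shortest directed path in $\Gamma_{\mathbf{k}}$ from $(0,0)$ to a terminal vertex. For a face $F$ of $\mathcal{P}_\lambda$, $\phi(F)$ is the subgraph of $Q^+$ whose edges are: all $((0,i),(0,i+1))$ and $((i,0),(i+1,0))$, $0\le i\le n-1$; $((i-1,j),(i,j))$ for $(i,j)\in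 I$ whenever some $x\in F$ has $x_{i,j}<x_{i,j+1}$; $((i,j-1),(i,j))$ for $(i,j)\in I$ whenever some $x\in F$ has $x_{i,j}>x_{i+1,j}$; its vertices are the endpoints of these edges. *)

From HB Require Import structures.
From mathcomp Require Import all_boot all_order all_algebra.
Set Implicit Arguments. Unset Strict Implicit. Unset Printing Implicit Defensive.
Import Order.TTheory GRing.Theory Num.Theory.

(* n_l = k_1 + ... + k_l  (n_0 = 0) *)
Definition psum (k : seq nat) (l : nat) : nat := \sum_(j < l) nth 0%N k j.

Definition terminal (k : seq nat) (n : nat) (v : nat * nat) : bool :=
  has (fun l => v == (psum k l, n - psum k l)) (iota 0 (size k).+1).

Definition in_Gamma (k : seq nat) (n : nat) (v : nat * nat) : bool :=
  has (fun l => (v.1 <= psum k l) && (v.2 <= n - psum k l)) (iota 0 (size k).+1).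

Definition Qedge (u v : nat * nat) : bool :=
  (v == (u.1, u.2.+1)) || (v == (u.1.+1, u.2)).

Definition Gedge (k : seq nat) (n : nat) (u v : nat * nat) : bool :=
  [&& Qedge u v, in_Gamma k n u & in_Gamma k n v].

(* a directed path in Gamma_k from (0,0) given by its vertex list after (0,0) *)
Definition Gpath (k : seq nat) (n : nat) (p : seq (nat * nat)) : bool :=
  path (Gedge k n) (0, 0)%N p.

Definition positive_path (k : seq nat) (n : nat) (p : seq (nat * nat)) : Prop :=
  [/\ Gpath k n p, terminal k n (last (0, 0)%N p) &
      forall q, Gpath k n q -> last (0, 0)%N q = last (0, 0)%N p ->
        (size p <= size q)%N].

Definition edge_on (p : seq (nat * nat)) (u v : nat * nat) : bool :=
  (u, v) \in zip ((0, 0)%N :: p) p.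

Definition inI (n i j : nat) : bool := [&& (0 < i)%N, (0 < j)%N & (i + j <= n)%N].

Section Poly.
Variable R : realFieldType.
Local Open Scope ring_scope.

(* points are functions nat -> nat -> R, required to vanish outside I *)
Definition point := nat -> nat -> R.

Definition xe (n : nat) (lam : nat -> R) (x : point) (i j : nat) : R :=
  if (i + j == n.+1)%N then lam i else x i j.

Definition inP (n : nat) (lam : nat -> R) (x : point) : Prop :=
  (forall i j, ~~ inI n i j -> x i j = 0) /\
  (forall i j, inI n i j ->
     xe n lam x i j <= xe n lam x i j.+1 /\ xe n lam x i.+1 j <= xe n lam x i j).

Definition linf (n : nat) (w x : point) : R :=
  \sum_(i < n) \sum_(j < n) (if inI n i j then w i j * x i j else 0).

Definition is_face (n : nat) (lam : nat -> R) (F : point -> Prop) : Prop :=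
  (exists w c, (forall x, inP n lam x -> linf n w x <= c) /\
               (forall x, F x <-> (inP n lam x /\ linf n w x = c))) /\
  (exists x, F x).

Definition phiE (n : nat) (lam : nat -> R) (F : point -> Prop) (u v : nat * nat) : Prop :=
  (exists i, (i < n)%N /\ u = (0, i)%N /\ v = (0, i.+1)%N) \/
  (exists i, (i < n)%N /\ u = (i, 0)%N /\ v = (i.+1, 0)%N) \/
  (exists i j, inI n i j /\ u = (i.-1, j) /\ v = (i, j) /\
     exists x, F x /\ xe n lam x i j < xe n lam x i j.+1) \/
  (exists i j, inI n i j /\ u = (i, j.-1) /\ v = (i, j) /\
     exists x, F x /\ xe n lam x i.+1 j < xe n lam x i j).

End Poly.

Definition lam_adapted (R : realFieldType) (k : seq nat) (n : nat) (lam : nat -> R) : Prop :=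
  forall i, (0 < i)%N -> (i < n)%N ->
    (i \in [seq psum k l | l <- iota 1 (size k)] -> (lam i.+1 < lam i)%R) /\
    (i \notin [seq psum k l | l <- iota 1 (size k)] -> lam i.+1 = lam i).

(* Fix a point x of F realizing the given edge, and keep only the edges of
   phi(F) that are strict at x (boundary edges, and interior edges whose
   defining inequality is strict at x).  At an interior vertex (i,j) both the
   incoming and the outgoing inequalities form a chain from x_{i+1,j} to
   x_{i,j+1}: x_{i+1,j} <= x_{i,j} <= x_{i,j+1} and
   x_{i+1,j} <= x_{i+1,j+1} <= x_{i,j+1}.  Hence a strict edge enters (i,j)
   iff x_{i+1,j} < x_{i,j+1} iff a strict edge leaves (i,j); on the
   antidiagonal this gap reads lambda_{i+1} < lambda_i, which makes (i,j)
   terminal.  So strict edges can always be extended backwards to (0,0) and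
   forwards to a terminal vertex; the resulting monotone lattice path stays
   below its terminal endpoint, hence inside Gamma_k, and is shortest because
   every edge of Q^+ raises i + j by one. *)
From HB Require Import structures.
From mathcomp Require Import all_boot all_order all_algebra.
From mathcomp Require Import zify lra.
Set Implicit Arguments. Unset Strict Implicit. Unset Printing Implicit Defensive.
Import Order.TTheory GRing.Theory Num.Theory.

Lemma path_mem_zip (T : eqType) (e : rel T) a s u v :
  path e a s -> (u, v) \in zip (a :: s) s -> e u v.
Proof.
elim: s a => [|b s IH] a //= /andP[eab bs].
by rewrite inE => /orP[/eqP[-> ->] // | /(IH _ bs)].
Qed.

Lemma mem_zip_last_cat (T : eqType) (a b : T) s1 s2 :
  (last a s1, b) \in zip (a :: s1 ++ b :: s2) (s1 ++ b :: s2).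
Proof. by elim: s1 a => [|c s1 IH] a /=; rewrite inE ?eqxx ?IH ?orbT. Qed.

Lemma path_le_last (T : Type) (le : rel T) :
  reflexive le -> transitive le ->
  forall a s, path le a s -> all (le^~ (last a s)) (a :: s).
Proof.
move=> le_refl le_trans a s; elim: s a => [|b s IH] a /=; first by rewrite le_refl.
case/andP=> lab /IH /= /andP[lbl lbs].
by rewrite (le_trans _ _ _ lab lbl) lbl.
Qed.

Section RankedPaths.

Variables (T : eqType) (e : rel T) (rank : T -> nat).
Hypothesis e_rank : forall u v, e u v -> rank v = (rank u).+1.

Lemma path_rank_last a q : path e a q -> rank (last a q) = rank a + size q.
Proof.
elim: q a => [|b q IH] a /=; first by rewrite addn0.
by case/andP=> /e_rank eab /IH ->; rewrite eab addSnnS.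
Qed.

Variables (o : T) (final : pred T) (N : nat).
Hypothesis e_bounded : forall u v, e u v -> rank v <= N.
Hypothesis source_reached : forall u v, e u v -> u = o \/ exists w, e w u.
Hypothesis target_extends : forall u v, e u v -> final v \/ exists w, e v w.

Lemma path_to_source u v : e u v -> exists2 q, path e o q & last o q = u.
Proof.
suff ext m w : rank w = m -> (w = o \/ exists w', e w' w) ->
    exists2 q, path e o q & last o q = w.
  by move=> /source_reached; apply: ext.
elim: m w => [|m IH] w rw [-> | [w' ew'w]]; try by exists [::].
  by move: (e_rank ew'w); rewrite rw.
have [|q oq lq] := IH w' _ (source_reached ew'w).
  by move: (e_rank ew'w); rewrite rw => -[].
by exists (rcons q w); rewrite ?rcons_path ?last_rcons ?oq ?lq.
Qed.

Lemma path_from_target u v : e u v -> exists2 q, path e v q & final (last v q).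
Proof.
suff ext m u' v' : N - rank v' = m -> e u' v' ->
    exists2 q, path e v' q & final (last v' q).
  exact: ext.
clear u v; elim: m u' v' => [|m IH] u' v' hm euv;
  case: (target_extends euv) => [fv | [w evw]]; try by exists [::].
  by have := e_bounded evw; rewrite (e_rank evw); lia.
have [|q wq fq] := IH v' w _ evw; first by rewrite (e_rank evw); lia.
by exists (w :: q); rewrite /= ?evw.
Qed.

Lemma edge_on_final_path u v : e u v ->
  exists p, [/\ path e o p, (u, v) \in zip (o :: p) p & final (last o p)].
Proof.
move=> euv; have [q oq lq] := path_to_source euv.
have [r vr fr] := path_from_target euv.
exists (q ++ v :: r); split.
- by rewrite cat_path oq lq /= euv.
- by rewrite -{1}lq mem_zip_last_cat.
- by rewrite last_cat.
Qed.

End RankedPaths.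

Definition level (v : nat * nat) : nat := v.1 + v.2.

Definition grid_le (u v : nat * nat) : bool := (u.1 <= v.1) && (u.2 <= v.2).

Lemma grid_le_refl : reflexive grid_le.
Proof. by move=> u; rewrite /grid_le !leqnn. Qed.

Lemma grid_le_trans : transitive grid_le.
Proof. by move=> v u w /andP[? ?] /andP[? ?]; apply/andP; split; lia. Qed.

Lemma Qedge_level u v : Qedge u v -> level v = (level u).+1.
Proof. by rewrite /level; case/orP=> /eqP -> /=; lia. Qed.

Lemma Qedge_grid_le u v : Qedge u v -> grid_le u v.
Proof. by rewrite /grid_le; case/orP=> /eqP -> /=; rewrite !leqnSn !leqnn. Qed.

Lemma Gedge_Qedge k n u v : Gedge k n u v -> Qedge u v.
Proof. by case/and3P. Qed.

Lemma terminal_col k n : terminal k n (0, n).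
Proof. by apply/hasP; exists 0%N; rewrite ?mem_iota // /psum big_ord0 subn0. Qed.

Lemma terminal_row k n : sumn k = n -> terminal k n (n, 0).
Proof.
move=> <-; apply/hasP; exists (size k); first by rewrite mem_iota; lia.
by rewrite /psum sumnE (big_nth 0%N) big_mkord subnn.
Qed.

Lemma terminal_block k n i :
  i \in [seq psum k l | l <- iota 1 (size k)] -> terminal k n (i, n - i).
Proof.
case/mapP=> l; rewrite mem_iota => /andP[_ lk] ->.
by apply/hasP; exists l; rewrite ?mem_iota.
Qed.

Lemma in_Gamma_grid_le k n y t : terminal k n t -> grid_le y t -> in_Gamma k n y.
Proof.
by case/hasP=> l lk /eqP -> /andP[y1 y2]; apply/hasP; exists l; rewrite ?y1 ?y2.
Qed.

Lemma Qpath_terminal_positive k n p :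
  path Qedge (0, 0)%N p -> terminal k n (last (0, 0)%N p) -> positive_path k n p.
Proof.
move=> Qp term.
have below := path_le_last grid_le_refl grid_le_trans (sub_path Qedge_grid_le Qp).
have Gp : Gpath k n p.
  apply: sub_in_path (_ : all (in_Gamma k n) _) Qp.
    by move=> u v uG vG Quv; apply/and3P.
  by apply: sub_all below => y; apply: in_Gamma_grid_le.
split=> // q Gq lq.
have Qq := sub_path (@Gedge_Qedge k n) Gq.
move: (path_rank_last Qedge_level Qp) (path_rank_last Qedge_level Qq).
by rewrite lq => -> /eqP; rewrite eqn_add2l => /eqP ->.
Qed.

Section StrictEdges.

Variables (R : realFieldType) (n : nat) (lam : nat -> R) (x : point R).
Local Notation X := (xe n lam x).

Definition strict_edge (u v : nat * nat) : bool :=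
  [|| [&& u.1 == 0%N, v == (0%N, u.2.+1) & (u.2 < n)%N],
      [&& u.2 == 0%N, v == (u.1.+1, 0%N) & (u.1 < n)%N],
      [&& v == (u.1.+1, u.2), inI n v.1 v.2 & (X v.1 v.2 < X v.1 v.2.+1)%R]
    | [&& v == (u.1, u.2.+1), inI n v.1 v.2 & (X v.1.+1 v.2 < X v.1 v.2)%R]].

Lemma strict_edgeP a b c d : strict_edge (a, b) (c, d) ->
  [\/ [/\ a = 0%N, c = 0%N, d = b.+1 & (b < n)%N],
      [/\ b = 0%N, c = a.+1, d = 0%N & (a < n)%N],
      [/\ c = a.+1, d = b, inI n c d & (X c d < X c d.+1)%R]
    | [/\ c = a, d = b.+1, inI n c d & (X c.+1 d < X c d)%R]].
Proof.
rewrite /strict_edge /=; case/or4P=> /and3P[/eqP + + h].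
- by move=> -> /eqP[-> ->]; apply: Or41.
- by move=> -> /eqP[-> ->]; apply: Or42.
- by case=> ? ? hI; subst; apply: Or43.
- by case=> ? ? hI; subst; apply: Or44.
Qed.

Lemma strict_edge_col b : (b < n)%N -> strict_edge (0, b) (0, b.+1).
Proof. by move=> bn; rewrite /strict_edge /= !eqxx bn. Qed.

Lemma strict_edge_row a : (a < n)%N -> strict_edge (a, 0) (a.+1, 0).
Proof. by move=> an; rewrite /strict_edge /= !eqxx an orbT. Qed.

Lemma strict_edge_down a b :
  inI n a.+1 b -> (X a.+1 b < X a.+1 b.+1)%R -> strict_edge (a, b) (a.+1, b).
Proof. by move=> hI lt; rewrite /strict_edge /= !eqxx hI lt !orbT. Qed.

Lemma strict_edge_right a b :
  inI n a b.+1 -> (X a.+1 b.+1 < X a b.+1)%R -> strict_edge (a, b) (a, b.+1).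
Proof. by move=> hI lt; rewrite /strict_edge /= !eqxx hI lt !orbT. Qed.

Lemma strict_edge_Qedge u v : strict_edge u v -> Qedge u v.
Proof.
case: u v => a b [c d] /strict_edgeP[] [] *; subst;
  by rewrite /Qedge /= eqxx ?orbT.
Qed.

Lemma strict_edge_level u v : strict_edge u v -> level v = (level u).+1.
Proof. by move/strict_edge_Qedge/Qedge_level. Qed.

Lemma strict_edge_bounded u v : strict_edge u v -> (level v <= n)%N.
Proof.
rewrite /level; case: u v => a b [c d] /strict_edgeP
  [[_ -> -> ?] | [_ -> -> ?] | [-> -> /and3P[_ _ ?] _] | [-> -> /and3P[_ _ ?] _]] /=;
  lia.
Qed.

Lemma strict_edge_phiE (F : point R -> Prop) u v :
  F x -> strict_edge u v -> phiE n lam F u v.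
Proof.
case: u v => a b [c d] Fx /strict_edgeP[] [-> ->] => [-> bn|-> an|hI lt|hI lt].
- by left; exists b.
- by right; left; exists a.
- by right; right; left; exists a.+1, b; do 3!split=> //; exists x.
- by right; right; right; exists a, b.+1; do 3!split=> //; exists x.
Qed.

Hypothesis interlacing : forall i j, inI n i j ->
  (X i j <= X i j.+1)%R /\ (X i.+1 j <= X i j)%R.

Definition gap (i j : nat) : bool := (X i.+1 j < X i j.+1)%R.

Lemma gap_of_in_edge i j u : (0 < i)%N -> (0 < j)%N ->
  strict_edge u (i, j) -> gap i j.
Proof.
rewrite /gap; case: u => a b i0 j0 /strict_edgeP[] [] //; try lia.
- move=> -> -> hI lt; have [] := interlacing hI; lra.
- move=> -> -> hI lt; have [] := interlacing hI; lra.
Qed.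

Lemma in_edge_of_gap i j : (0 < i)%N -> (0 < j)%N -> (i + j <= n)%N ->
  gap i j -> exists w, strict_edge w (i, j).
Proof.
rewrite /gap; case: i => // i; case: j => // j _ _ ijn g.
have hI : inI n i.+1 j.+1 by rewrite /inI; apply/and3P; split; lia.
have [le1 le2] := interlacing hI.
case: (ltP (X i.+1 j.+1) (X i.+1 j.+2)) => lt.
  by exists (i, j.+1); apply: strict_edge_down.
by exists (i.+1, j); apply: strict_edge_right => //; lra.
Qed.

Lemma gap_of_out_edge i j w : (0 < i)%N -> (0 < j)%N ->
  strict_edge (i, j) w -> gap i j.
Proof.
rewrite /gap; case: w => c d i0 j0 /strict_edgeP[] [] //; try lia.
- move=> -> -> /and3P[_ _ ijn] lt.
  have hI : inI n i j.+1 by rewrite /inI; apply/and3P; split; lia.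
  have [] := interlacing hI; lra.
- move=> -> -> /and3P[_ _ ijn] lt.
  have hI : inI n i.+1 j by rewrite /inI; apply/and3P; split; lia.
  have [] := interlacing hI; lra.
Qed.

Lemma out_edge_of_gap i j : (0 < i)%N -> (0 < j)%N -> (i + j < n)%N ->
  gap i j -> exists w, strict_edge (i, j) w.
Proof.
rewrite /gap => i0 j0 ijn g.
have hI : inI n i.+1 j by rewrite /inI; apply/and3P; split; lia.
have [le1 le2] := interlacing hI.
case: (ltP (X i.+1 j) (X i.+1 j.+1)) => lt.
  by exists (i.+1, j); apply: strict_edge_down.
exists (i, j.+1); apply: strict_edge_right; last by lra.
by rewrite /inI; apply/and3P; split; lia.
Qed.

Lemma strict_edge_source u v : strict_edge u v ->
  u = (0, 0)%N \/ exists w, strict_edge w u.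
Proof.
case: u v => a b v euv; have := strict_edge_bounded euv.
rewrite (strict_edge_level euv) /level /=.
case: a euv => [|a]; case: b => [|b] euv bound; [by left | right ..].
- by exists (0, b)%N; apply: strict_edge_col; lia.
- by exists (a, 0)%N; apply: strict_edge_row; lia.
- by apply: in_edge_of_gap => //; [lia | apply: gap_of_out_edge euv].
Qed.

Variable k : seq nat.
Hypotheses (lam_k : lam_adapted k n lam) (sum_k : sumn k = n).

Lemma gap_terminal i j : (0 < i)%N -> (0 < j)%N -> (i + j = n)%N ->
  gap i j -> terminal k n (i, j).
Proof.
move=> i0 j0 ijn; rewrite /gap /xe addSn addnS ijn eqxx => lt.
have i_n : (i < n)%N by lia.
have [_ inner] := lam_k i0 i_n.
have -> : j = (n - i)%N by lia.
case: (boolP (i \in [seq psum k l | l <- iota 1 (size k)]))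
  => [/terminal_block // | /inner eq].
by rewrite eq ltxx in lt.
Qed.

Lemma strict_edge_target u v : strict_edge u v ->
  terminal k n v \/ exists w, strict_edge v w.
Proof.
case: v u => c d u euv; have := strict_edge_bounded euv.
have := strict_edge_level euv; rewrite /level /=.
case: c euv => [|c]; case: d => [|d] euv lvl bound //.
- case: (ltnP d.+1 n) => dn.
    by right; exists (0, d.+2)%N; apply: strict_edge_col.
  left; have -> : d.+1 = n by lia.
  exact: terminal_col.
- case: (ltnP c.+1 n) => cn.
    by right; exists (c.+2, 0)%N; apply: strict_edge_row.
  left; have -> : c.+1 = n by lia.
  exact: terminal_row.
- have g := gap_of_in_edge (ltn0Sn c) (ltn0Sn d) euv.
  case: (ltnP (c.+1 + d.+1) n) => cdn.
    by right; apply: out_edge_of_gap.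
  by left; apply: gap_terminal => //; lia.
Qed.

End StrictEdges.

Lemma face_subset_P (R : realFieldType) n (lam : nat -> R) F x :
  is_face n lam F -> F x -> inP n lam x.
Proof. by case=> [[w [c [_ Fwc]]] _] /Fwc[]. Qed.

Lemma phiE_strict_edge (R : realFieldType) n (lam : nat -> R) F u v :
  (exists x, F x) -> phiE n lam F u v -> exists2 x, F x & strict_edge n lam x u v.
Proof.
move=> [x0 Fx0].
case=> [[i [? [-> ->]]] | [[i [? [-> ->]]] | [[i [j [hI [-> [-> [x [Fx lt]]]]]]] |
        [i [j [hI [-> [-> [x [Fx lt]]]]]]]]]].
- by exists x0; last apply: strict_edge_col.
- by exists x0; last apply: strict_edge_row.
- by exists x => //; case: i hI lt => // i hI lt; apply: strict_edge_down.
- exists x => //; case: j hI lt => [|j] hI lt; first by rewrite /inI andbF in hI.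
  exact: strict_edge_right.
Qed.

Theorem lemma2p3 (R : realFieldType) (k : seq nat) (n : nat) (lam : nat -> R)
  (hk : all (fun a => (0 < a)%N) k) (hn : sumn k = n)
  (hlam : lam_adapted k n lam)
  (F : point R -> Prop) (hF : is_face n lam F) :
  forall u v, phiE n lam F u v ->
    exists p, [/\ positive_path k n p, edge_on p u v &
                 forall u' v', edge_on p u' v' -> phiE n lam F u' v'].
Proof.
move=> u v /(phiE_strict_edge hF.2) [x Fx uv].
have [_ interlacing] := face_subset_P hF Fx.
have [p [xp uv_p term]] := edge_on_final_path (@strict_edge_level _ n lam x)
  (@strict_edge_bounded _ n lam x) (strict_edge_source interlacing)
  (strict_edge_target interlacing hlam hn) uv.
exists p; split=> //.
- exact: Qpath_terminal_positive (sub_path (@strict_edge_Qedge _ n lam x) xp) term.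
- by move=> u' v' /(path_mem_zip xp); apply: strict_edge_phiE.
Qed.
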